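(* Let $A\in\mathbb{R}^{m\times N}$ and $K\subseteq[N]=\{1,\dots,N\}$. Then the following are equivalent: (i) every vector $x_0\in\mathbb{R}^N_+$ with $\operatorname{supp}x_0\subseteq K$ is the unique solution of $(P_+)$ with $b=Ax_0$; (ii) $\mathbb{1}_K$ is the unique solution of $(P_+)$ with $b=A\mathbb{1}_K$.
   Context: For $b\in\mathbb{R}^m$, $(P_+)$ denotes the convex program $\min \|x\|_1$ subject to $Ax=b$ and $x\in\mathbb{R}_+^N$ (all entries nonnegative). ''Unique solution'' means unique minimizer. $\mathbb{1}_K\in\mathbb{R}^N$ denotes the vector with entries $1$ on $K$ and $0$ on $[N]\setminus K$. *)

From mathcomp Require Import all_boot all_order all_algebra.
From mathcomp Require Import reals.
Set Implicit Arguments. Unset Strict Implicit. Unset Printing Implicit Defensive.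
Import Order.TTheory GRing.Theory Num.Theory.
Local Open Scope ring_scope.

Definition l1norm (R : realType) (N : nat) (x : 'cV[R]_N) : R :=
  \sum_(i < N) `|x i 0|.

Definition nonneg_vec (R : realType) (N : nat) (x : 'cV[R]_N) : Prop :=
  forall i, 0 <= x i 0.

Definition supp (R : realType) (N : nat) (x : 'cV[R]_N) : {set 'I_N} :=
  [set i | x i 0 != 0].

Definition feasible_Pplus (R : realType) (m N : nat) (A : 'M[R]_(m, N))
  (b : 'cV[R]_m) (x : 'cV[R]_N) : Prop :=
  A *m x = b /\ nonneg_vec x.

Definition unique_sol_Pplus (R : realType) (m N : nat) (A : 'M[R]_(m, N))
  (b : 'cV[R]_m) (x : 'cV[R]_N) : Prop :=
  feasible_Pplus A b x /\
  (forall z, feasible_Pplus A b z -> l1norm x <= l1norm z) /\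
  (forall z, feasible_Pplus A b z -> l1norm z <= l1norm x -> z = x).

Definition indic (R : realType) (N : nat) (K : {set 'I_N}) : 'cV[R]_N :=
  \col_(i < N) (if i \in K then 1 else 0).

(** The indicator [1_K] is the "most interior" nonnegative vector supported in [K]:
    for any nonnegative [x] supported in [K] and any competitor [z] with [A z = A x],
    the point [1_K + t (z - x)] is still feasible for [b = A 1_K] when [t > 0] is small.
    On the nonnegative orthant the l1 norm is linear, so its l1 norm exceeds that of
    [1_K] by [t (|z|_1 - |x|_1)]; optimality and uniqueness of [1_K] therefore transfer
    to [x].  The argument only uses that [supp x] is contained in the support of the
    nonnegative unique solution. *)

From mathcomp Require Import all_boot all_order all_algebra.
From mathcomp Require Import reals.
From mathcomp Require Import lra.
Set Implicit Arguments.
Import Order.TTheory GRing.Theory Num.Theory.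
Local Open Scope ring_scope.

Section NonnegativeOrthant.
Variables (R : realType) (N : nat).
Implicit Types (x y z v : 'cV[R]_N).

Lemma l1norm_nonneg x : nonneg_vec x -> l1norm x = \sum_i x i 0.
Proof. by move=> x_ge0; apply: eq_bigr => i _; exact: ger0_norm. Qed.

Lemma l1norm_nonneg_perturb x y z (t : R) :
  nonneg_vec x -> nonneg_vec y -> nonneg_vec z -> nonneg_vec (y + t *: (z - x)) ->
  l1norm (y + t *: (z - x)) = l1norm y + t * (l1norm z - l1norm x).
Proof.
move=> x_ge0 y_ge0 z_ge0 w_ge0; rewrite !l1norm_nonneg // -sumrB mulr_sumr.
by rewrite -big_split; apply: eq_bigr => i _; rewrite !mxE.
Qed.

Lemma nonneg_vec_perturb v y :
  nonneg_vec y -> (forall i, y i 0 = 0 -> 0 <= v i 0) ->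
  exists2 t : R, 0 < t & nonneg_vec (y + t *: v).
Proof.
move=> y_ge0 v_ge0_off_supp.
pose t := \big[Order.min/1]_(i | y i 0 != 0) (y i 0 / (1 + `|v i 0|)).
have t_gt0 : 0 < t.
  rewrite /t; apply: lt_bigmin => // i yi_neq0; apply: divr_gt0; last by rewrite ltr_pwDl.
  by rewrite lt_def yi_neq0 y_ge0.
exists t => // i; rewrite !mxE.
have [yi0 | yi_neq0] := eqVneq (y i 0) 0.
  by rewrite yi0 add0r; apply: mulr_ge0; [exact: ltW | exact: v_ge0_off_supp].
have : t <= y i 0 / (1 + `|v i 0|) by exact: bigmin_le_cond.
rewrite ler_pdivlMr ?ltr_pwDl // => t_small.
have : - (t * `|v i 0|) <= t * v i 0.
  by rewrite -mulrN; apply: ler_wpM2l; [exact: ltW | exact: lerNnormlW].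
nra.
Qed.

End NonnegativeOrthant.

Lemma supp_indic (R : realType) N (K : {set 'I_N}) : supp (indic R K) = K.
Proof. by apply/setP => i; rewrite inE mxE; case: (i \in K); rewrite ?oner_eq0 ?eqxx. Qed.

Lemma indic_nonneg (R : realType) N (K : {set 'I_N}) : nonneg_vec (indic R K).
Proof. by move=> i; rewrite mxE; case: ifP. Qed.

Lemma unique_sol_Pplus_supp_subset (R : realType) m N (A : 'M[R]_(m, N))
    (x y : 'cV[R]_N) :
  unique_sol_Pplus A (A *m y) y -> nonneg_vec x -> supp x \subset supp y ->
  unique_sol_Pplus A (A *m x) x.
Proof.
move=> [[_ y_ge0] [y_min y_uniq]] x_ge0 x_supp.
have perturb z : feasible_Pplus A (A *m x) z ->
    exists2 t, 0 < t & feasible_Pplus A (A *m y) (y + t *: (z - x)) /\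
      l1norm (y + t *: (z - x)) = l1norm y + t * (l1norm z - l1norm x).
  move=> [Az z_ge0]; have [|t t_gt0 w_ge0] := nonneg_vec_perturb (z - x) y_ge0.
    move=> i yi0; have := contra (subsetP x_supp i).
    rewrite !inE !negbK yi0 eqxx => /(_ isT) /eqP xi0.
    by rewrite !mxE xi0 subr0.
  exists t => //; split; last exact: l1norm_nonneg_perturb.
  by split; rewrite // mulmxDr -scalemxAr mulmxBr Az subrr scaler0 addr0.
split=> //; split=> z /perturb [t t_gt0 [w_feas l1w]].
  by have := y_min _ w_feas; rewrite l1w lerDl pmulr_rge0 // subr_ge0.
move=> z_le_x; have := y_uniq _ w_feas; rewrite l1w gerDl pmulr_rle0 // subr_le0.
move=> /(_ z_le_x) /(canRL (addKr y)); rewrite addNr => /eqP.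
by rewrite scaler_eq0 gt_eqF //= subr_eq0 => /eqP.
Qed.

Theorem proposition1p1 (R : realType) (m N : nat) (A : 'M[R]_(m, N))
  (K : {set 'I_N}) :
  (forall x0 : 'cV[R]_N, nonneg_vec x0 -> supp x0 \subset K ->
     unique_sol_Pplus A (A *m x0) x0)
  <->
  unique_sol_Pplus A (A *m indic R K) (indic R K).
Proof.
split=> [all_unique | indic_unique].
  by apply: all_unique; [exact: indic_nonneg | rewrite supp_indic].
move=> x0 x0_ge0 x0_supp.
by apply: (unique_sol_Pplus_supp_subset indic_unique); rewrite ?supp_indic.
Qed.
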